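(* Let $n$ be a positive integer with $n^2 \ge 811$. Every family of $n^2$ graphs, each with $n$ vertices, has an induced-universal graph with fewer than $15n^2/7$ vertices.
   Context: A graph $U$ is an induced-universal graph for a family $\mathscr{F}$ if every graph of $\mathscr{F}$ is isomorphic to an induced subgraph of $U$. *)

From mathcomp Require Import all_boot.
Set Implicit Arguments. Unset Strict Implicit. Unset Printing Implicit Defensive.

Definition simple_graph (V : finType) (e : rel V) : Prop :=
  (forall x y, e x y = e y x) /\ (forall x, e x x = false).

Definition induced_subgraph_iso (V W : finType) (e : rel V) (g : rel W) : Prop :=
  exists f : V -> W, injective f /\ forall x y, g (f x) (f y) = e x y.

Definition induced_universal (I V W : finType) (F : I -> rel V) (g : rel W) : Prop :=
  forall i, induced_subgraph_iso (F i) g.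

(* Choose a finite field K whose size q is a power of 2 with n <= q < 2n, identify
   the n vertices with distinct elements of K and the n^2 <= q^2 graphs with
   distinct affine lines y = a x + b of K^2.  Draw the i-th graph on the points of
   its line inside V x K.  Two distinct lines share at most one point, so no
   pair of points carries an edge coming from two different lines and every copy
   is induced.  The resulting graph has n q < 2 n^2 vertices. *)

From mathcomp Require Import all_boot.
From mathcomp Require Import ssralg finalg finfield ring zify.
Set Implicit Arguments. Unset Strict Implicit. Unset Printing Implicit Defensive.
Import GRing.Theory.

Lemma exists_inj_of_card_leq (A B : finType) :
  #|A| <= #|B| -> exists f : A -> B, injective f.
Proof.
move=> leAB; exists (fun x => enum_val (widen_ord leAB (enum_rank x))).
by move=> x y /enum_val_inj [] /val_inj /enum_rank_inj.
Qed.

Lemma exists_finField_card_between (n : nat) :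
  1 < n -> exists K : finFieldType, n <= #|K| < 2 * n.
Proof.
move=> n_gt1; have /andP[lt_pow_n le_n_pow] := up_log_bounds (isT : 1 < 2) n_gt1.
have k_gt0 : 0 < up_log 2 n by rewrite up_log_gt0 n_gt1.
have [K _ card_K] := pPrimePowerField (isT : prime 2) k_gt0.
by exists K; rewrite card_K le_n_pow -(prednK k_gt0) expnS ltn_pmul2l.
Qed.

Section Lines.
Local Open Scope ring_scope.

Lemma eq_line_of_two_points (K : fieldType) (a b a' b' u v : K) : u != v ->
  a * u + b = a' * u + b' -> a * v + b = a' * v + b' -> (a, b) = (a', b').
Proof.
move=> neq_uv Eu Ev.
have : (a - a') * (u - v) = (a * u + b - (a' * u + b')) - (a * v + b - (a' * v + b')).
  by ring.
rewrite Eu Ev !subrr => /eqP; rewrite mulf_eq0 [u - v == 0]subr_eq0 (negbTE neq_uv) orbF subr_eq0.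
move=> /eqP Ea; rewrite Ea in Eu *; congr (_, _); exact: addrI Eu.
Qed.

Variables (K : finFieldType) (I V : finType) (F : I -> rel V).
Variables (line : I -> K * K) (coord : V -> K).
Hypotheses (line_inj : injective line) (coord_inj : injective coord).
Hypothesis F_simple : forall i, simple_graph (F i).

Definition on_line (l : K * K) (p : V * K) : bool := p.2 == l.1 * coord p.1 + l.2.

Definition lines_graph : rel (V * K) := fun p q =>
  [exists i, [&& on_line (line i) p, on_line (line i) q & F i p.1 q.1]].

Definition line_embedding (i : I) (x : V) : V * K := (x, (line i).1 * coord x + (line i).2).

Lemma line_embedding_inj i : injective (line_embedding i).
Proof. by move=> x y []. Qed.

Lemma on_line_embedding i x : on_line (line i) (line_embedding i x).
Proof. exact: eqxx. Qed.

Lemma eq_line_of_on_line (l l' : K * K) (p q : V * K) : p.1 != q.1 ->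
  on_line l p -> on_line l q -> on_line l' p -> on_line l' q -> l = l'.
Proof.
case: l l' => [a b] [a' b'] neq_pq /eqP Ep /eqP Eq /eqP Ep' /eqP Eq'.
apply: (@eq_line_of_two_points _ _ _ _ _ (coord p.1) (coord q.1)).
- by apply: contra neq_pq => /eqP /coord_inj ->.
- by rewrite -Ep -Ep'.
- by rewrite -Eq -Eq'.
Qed.

Lemma lines_graph_simple : simple_graph lines_graph.
Proof.
split=> [p q | p]; rewrite /lines_graph /=.
  by apply/existsP/existsP=> -[i /and3P[onp onq Fpq]]; exists i;
     rewrite onp onq (proj1 (F_simple i)).
by apply/existsP=> -[i /and3P[_ _]]; rewrite (proj2 (F_simple i)).
Qed.

Lemma lines_graph_embedding i x y :
  lines_graph (line_embedding i x) (line_embedding i y) = F i x y.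
Proof.
rewrite /lines_graph; apply/existsP/idP=> [[j /and3P[onx ony Fxy]] | Fxy]; last first.
  by exists i; rewrite !on_line_embedding.
have [Exy | neq_xy] := eqVneq x y; first by rewrite Exy (proj2 (F_simple j)) in Fxy.
have Eij : line i = line j.
  exact: (eq_line_of_on_line (p := line_embedding i x) (q := line_embedding i y) neq_xy
           (on_line_embedding i x) (on_line_embedding i y) onx ony).
by move/line_inj: Eij Fxy => <- /=.
Qed.

Lemma lines_graph_universal : induced_universal F lines_graph.
Proof.
move=> i; exists (line_embedding i); split; first exact: line_embedding_inj.
exact: (lines_graph_embedding i).
Qed.

End Lines.

Definition relabel (W : finType) (g : rel W) : rel 'I_#|W| :=
  fun a b => g (enum_val a) (enum_val b).

Lemma relabel_simple (W : finType) (g : rel W) :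
  simple_graph g -> simple_graph (relabel g).
Proof. by case=> g_sym g_irr; split=> [a b | a]; rewrite /relabel ?g_irr // g_sym. Qed.

Lemma relabel_universal (I V W : finType) (F : I -> rel V) (g : rel W) :
  induced_universal F g -> induced_universal F (relabel g).
Proof.
move=> univ_g i; have [f [f_inj Ef]] := univ_g i.
exists (fun x => enum_rank (f x)); split; first by move=> x y /enum_rank_inj /f_inj.
by move=> x y; rewrite /relabel !enum_rankK.
Qed.

Theorem corollary2 (n : nat) (hn : 0 < n) (hn2 : 811 <= n ^ 2)
  (F : 'I_(n ^ 2) -> rel 'I_n) (hF : forall i, simple_graph (F i)) :
  exists (m : nat) (g : rel 'I_m),
    7 * m < 15 * n ^ 2 /\ simple_graph g /\ induced_universal F g.
Proof.
(* n ^ 2 >= 811 only serves to exclude n = 1: no field has fewer than 2 elements. *)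
have n_gt1 : 1 < n by nia.
have [K /andP[le_n_K lt_K_2n]] := exists_finField_card_between n_gt1.
have lt_7K_15n : 7 * #|K| < 15 * n by lia.
have [coord coord_inj] : exists coord : 'I_n -> K, injective coord.
  by apply: exists_inj_of_card_leq; rewrite card_ord.
have [line line_inj] : exists line : 'I_(n ^ 2) -> K * K, injective line.
  by apply: exists_inj_of_card_leq; rewrite card_prod card_ord -mulnn leq_mul.
exists #|{: 'I_n * K}|, (relabel (lines_graph F line coord)); split; last split.
- by rewrite card_prod card_ord -mulnn mulnCA [15 * _]mulnCA ltn_pmul2l.
- exact/relabel_simple/lines_graph_simple/hF.
- exact/relabel_universal/lines_graph_universal.
Qed.
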